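(* For every oriented diagram $D$ with double lines of degree $0$, $pr_{wp}(pr_{wp}(D))=pr_{wp}(D)$.
   Context: A diagram with double lines (representing a knot in $S_g\times S^1$, $S_g$ a closed oriented surface) is a virtual knot diagram in the plane decorated by finitely many double lines, marks on the curve away from crossings recording where the knot meets a fixed level $S_g\times\{x_0\}$; for an oriented diagram each double line has a sign $\pm1$ according to the direction in which the knot passes through that level. The degree is the sum of the signs of all double lines. For a classical crossing $c$, $\gamma_c$ is the closed path following the oriented curve from $c$, leaving along the under-strand, until it first returns to $c$; the winding parity of $c$ is the sum of the signs of the double lines on $\gamma_c$ (an integer in degree $0$). For a degree-$0$ diagram $D$, $pr_{wp}(D)$ is obtained as follows: for each classical crossing $c$ with winding parity $i$, if $i\ge0$ keep $c$ and put $j=i$; if $i<0$ switch over/under at $c$ and put $j=-i$; then on the under-strand of the resulting crossing insert $j$ double lines of sign $-1$ immediately after $c$ and $j$ double lines of sign $+1$ immediately before $c$. *)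

From mathcomp Require Import all_boot all_order all_algebra.
Set Implicit Arguments. Unset Strict Implicit. Unset Printing Implicit Defensive.
Import Order.TTheory GRing.Theory Num.Theory.
Local Open Scope ring_scope.

(* An event met when travelling along the oriented knot (from a base point):
   - [Pass c over sgn]: passage through classical crossing [c] along its
     over-strand ([over = true]) or under-strand ([over = false]);
     [sgn] is the local sign (writhe) of crossing [c] (true = +1, false = -1);
   - [DL s]: a double line of sign +1 ([s = true]) or -1 ([s = false]).
   Virtual crossings are not recorded (Gauss-code model of virtual diagrams). *)
Inductive event : Type :=
  | Pass of nat & bool & bool
  | DL of bool.

(* An oriented diagram with double lines: the cyclic word of events read along
   the oriented curve starting from a base point. *)
Definition diagram := seq event.

Definition is_pass (c : nat) (over : bool) (e : event) : bool :=
  match e with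
  | Pass d o _ => (d == c) && (o == over)
  | DL _ => false
  end.

Definition pass_eq (c : nat) (over sgn : bool) (e : event) : bool :=
  match e with
  | Pass d o b => [&& d == c, o == over & b == sgn]
  | DL _ => false
  end.

Definition wf_diagram (D : diagram) : Prop :=
  (forall c : nat,
      count (is_pass c true) D = count (is_pass c false) D /\
      (count (is_pass c true) D <= 1)%N) /\
  (forall (c : nat) (o1 o2 b1 b2 : bool),
      has (pass_eq c o1 b1) D -> has (pass_eq c o2 b2) D -> b1 = b2).

Definition dl_sign (e : event) : int :=
  match e with
  | DL true => 1
  | DL false => -1
  | Pass _ _ _ => 0
  end.

Definition sum_dl (s : seq event) : int := \sum_(e <- s) dl_sign e.

Definition degree (D : diagram) : int := sum_dl D.

(* gamma_c: the path from c, leaving along the under-strand, following the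
   orientation (cyclically) until the first return to c (the over passage). *)
Definition gamma (D : diagram) (c : nat) : seq event :=
  let u := find (is_pass c false) D in
  let r := rot u.+1 D in
  take (find (is_pass c true) r) r.

Definition winding_parity (D : diagram) (c : nat) : int := sum_dl (gamma D c).

Definition pr_wp_event (D : diagram) (e : event) : seq event :=
  match e with
  | DL s => [:: DL s]
  | Pass c o b =>
      let i := winding_parity D c in
      let o' := if 0 <= i then o else ~~ o in
      let b' := if 0 <= i then b else ~~ b in
      let j := `|i|%N in
      if o' then [:: Pass c o' b']
      else nseq j (DL true) ++ Pass c o' b' :: nseq j (DL false)
  end.

Definition pr_wp (D : diagram) : diagram := flatten (map (pr_wp_event D) D).

(* Let c be a crossing of winding parity i.  In pr_wp(D) the under-passage of
   c is immediately followed by |i| double lines of sign -1, while the |i|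
   double lines of sign +1 sit immediately before it, so the new loop gamma_c,
   which starts right after the under-passage and stops at the over-passage,
   picks up -|i| but not +|i|.  The rest of the new gamma_c carries the double
   lines of the old gamma_c when c is kept (total i = |i|), and those of the
   complementary loop when c is switched (total deg - i = -i = |i| in degree
   0).  So every crossing of pr_wp(D) has winding parity 0, and pr_wp leaves
   such a diagram unchanged. *)
From mathcomp Require Import all_boot all_order all_algebra zify.
Set Implicit Arguments.
Unset Strict Implicit.
Unset Printing Implicit Defensive.
Import GRing.Theory Num.Theory.
Local Open Scope ring_scope.

Definition crossing_in (Q : pred nat) (e : event) : bool :=
  if e is Pass c _ _ then Q c else true.

Definition pr_wp_on (D : diagram) (s : seq event) : seq event :=
  flatten (map (pr_wp_event D) s).

Lemma sum_dl_cat s t : sum_dl (s ++ t) = sum_dl s + sum_dl t.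
Proof. exact: big_cat. Qed.

Lemma sum_dl_cons e s : sum_dl (e :: s) = dl_sign e + sum_dl s.
Proof. exact: big_cons. Qed.

Lemma sum_dl_nseq_pos k : sum_dl (nseq k (DL true)) = k%:Z.
Proof.
by elim: k => [|k IHk]; [exact: big_nil | rewrite [nseq _ _]/= sum_dl_cons IHk /=; lia].
Qed.

Lemma sum_dl_nseq_neg k : sum_dl (nseq k (DL false)) = - k%:Z.
Proof.
by elim: k => [|k IHk]; [exact: big_nil | rewrite [nseq _ _]/= sum_dl_cons IHk /=; lia].
Qed.

Lemma has_is_pass_free c o s :
  all (crossing_in (predC1 c)) s -> has (is_pass c o) s = false.
Proof.
move=> free; apply/negbTE; rewrite -all_predC; apply: sub_all free => -[d o' b|//].
by rewrite /= negb_and => ->.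
Qed.

Lemma count_at_crossing c s :
  count (predC (crossing_in (predC1 c))) s =
  (count (is_pass c true) s + count (is_pass c false) s)%N.
Proof.
elim: s => [|[d o b|x] s IHs] //=; rewrite IHs //.
by rewrite negbK; case: (d == c); case: o => /=; lia.
Qed.

Section WindingParity.

Variables (c : nat) (A B C : seq event).
Hypothesis free_ABC : all (crossing_in (predC1 c)) (A ++ B ++ C).

Lemma gamma_under_first b1 b2 :
  gamma (A ++ Pass c false b1 :: B ++ Pass c true b2 :: C) c = B.
Proof.
move: free_ABC; rewrite !all_cat => /and3P[freeA freeB _].
rewrite /gamma find_cat has_is_pass_free //= !eqxx addn0 -cat_rcons.
rewrite -(size_rcons A (Pass c false b1)) rot_size_cat -catA.
by rewrite find_cat has_is_pass_free //= !eqxx addn0 take_size_cat.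
Qed.

Lemma gamma_over_first b1 b2 :
  gamma (A ++ Pass c true b1 :: B ++ Pass c false b2 :: C) c = C ++ A.
Proof.
move: free_ABC; rewrite !all_cat => /and3P[freeA freeB freeC].
have freeCA : all (crossing_in (predC1 c)) (C ++ A) by rewrite all_cat freeC.
rewrite /gamma -cat_cons catA find_cat has_cat /= andbF !has_is_pass_free //= eqxx addn0.
rewrite -(cat_rcons (Pass c false b2)).
rewrite -(size_rcons (A ++ Pass c true b1 :: B) (Pass c false b2)) rot_size_cat.
by rewrite rcons_cat /= catA find_cat has_is_pass_free //= !eqxx addn0 take_size_cat.
Qed.

Lemma winding_parity_split D o1 o2 b1 b2 :
  D = A ++ Pass c o1 b1 :: B ++ Pass c o2 b2 :: C -> o1 != o2 ->
  winding_parity D c = if o1 then degree D - sum_dl B else sum_dl B.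
Proof.
move=> ->; rewrite /winding_parity /degree.
case: o1 o2 => [] [] // _; rewrite ?gamma_over_first ?gamma_under_first //.
by rewrite !(sum_dl_cat, sum_dl_cons) /=; lia.
Qed.

End WindingParity.

Lemma wf_diagram_split D c :
  wf_diagram D -> ~~ all (crossing_in (predC1 c)) D ->
  exists A B C o1 o2 b1 b2,
    [/\ D = A ++ Pass c o1 b1 :: B ++ Pass c o2 b2 :: C, o1 != o2
      & all (crossing_in (predC1 c)) (A ++ B ++ C)].
Proof.
move=> [/(_ c) [over_under over_le1] _]; rewrite -has_predC.
set p := predC _ => pD.
have count_p : count p D = 2%N.
  by move: pD; rewrite has_count count_at_crossing over_under; lia.
have pass_le1 o : (count (is_pass c o) D <= 1)%N by case: o; lia.
have count0 s : ~~ has p s -> count p s = 0%N by rewrite has_count; lia.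
have free_hasN s : ~~ has p s -> all (crossing_in (predC1 c)) s.
  by rewrite has_predC negbK.
move: count_p pass_le1; case/split_find: pD => x A R px pA.
case: x px => [d o1 b1|//]; rewrite /= negbK => /eqP ->.
rewrite cat_rcons count_cat /= eqxx count0 // => countR.
have pR : has p R by rewrite has_count; lia.
move: countR; case/split_find: pR => y B C + pB.
case: y => [e o2 b2|//]; rewrite /= negbK => /eqP ->.
rewrite cat_rcons count_cat /= eqxx count0 // => countC pass_le1.
have pC : ~~ has p C by rewrite has_count; lia.
exists A, B, C, o1, o2, b1, b2; split=> //.
  apply/negP => /eqP o12; move: (pass_le1 o1).
  by rewrite o12 count_cat /= count_cat /= !eqxx; lia.
by rewrite !all_cat !free_hasN.
Qed.

Lemma pr_wp_event_Pass D c o b (i := winding_parity D c)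
    (o' := if 0 <= i then o else ~~ o) (k := if o' then 0%N else `|i|%N) :
  pr_wp_event D (Pass c o b) =
  nseq k (DL true) ++ Pass c o' (if 0 <= i then b else ~~ b) :: nseq k (DL false).
Proof. by rewrite /k /o' /=; case: (if 0 <= i then o else ~~ o). Qed.

Lemma pr_wp_on_cat D s t : pr_wp_on D (s ++ t) = pr_wp_on D s ++ pr_wp_on D t.
Proof. by rewrite /pr_wp_on map_cat flatten_cat. Qed.

Lemma pr_wp_on_cons D e s : pr_wp_on D (e :: s) = pr_wp_event D e ++ pr_wp_on D s.
Proof. by []. Qed.

Lemma sum_dl_pr_wp_on D s : sum_dl (pr_wp_on D s) = sum_dl s.
Proof.
elim: s => [|e s IHs] //; rewrite pr_wp_on_cons sum_dl_cat sum_dl_cons IHs.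
congr (_ + _); case: e => [c o b|x]; last exact: big_seq1.
rewrite pr_wp_event_Pass sum_dl_cat sum_dl_cons.
by rewrite sum_dl_nseq_pos sum_dl_nseq_neg /=; lia.
Qed.

Lemma all_crossing_in_pr_wp_on Q D s :
  all (crossing_in Q) s -> all (crossing_in Q) (pr_wp_on D s).
Proof.
elim: s => [|e s IHs] // /andP[Qe /IHs Qs]; rewrite pr_wp_on_cons all_cat Qs andbT.
case: e Qe => [c o b|//]; rewrite pr_wp_event_Pass /= => Qc.
by rewrite all_cat /= !all_nseq Qc !orbT.
Qed.

Lemma pr_wp_on_id D s :
  all (crossing_in (fun c => winding_parity D c == 0)) s -> pr_wp_on D s = s.
Proof.
elim: s => [|e s IHs] // /andP[wp0 /IHs ids]; rewrite pr_wp_on_cons ids.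
case: e wp0 => [c o b|//]; rewrite pr_wp_event_Pass /= => /eqP ->.
by case: o.
Qed.

Lemma degree_pr_wp D : degree (pr_wp D) = degree D.
Proof. exact: sum_dl_pr_wp_on. Qed.

Lemma winding_parity_pr_wp D c :
  wf_diagram D -> degree D = 0 -> ~~ all (crossing_in (predC1 c)) D ->
  winding_parity (pr_wp D) c = 0.
Proof.
move=> wfD degD /(wf_diagram_split wfD) [A [B [C [o1 [o2 [b1 [b2 [defD o12 free]]]]]]]].
have := winding_parity_split free defD o12; rewrite degD sub0r.
set i := winding_parity D c => wpD.
set o1' := if 0 <= i then o1 else ~~ o1; set o2' := if 0 <= i then o2 else ~~ o2.
set k1 := if o1' then 0%N else `|i|%N; set k2 := if o2' then 0%N else `|i|%N.
have shape : pr_wp D =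
    (pr_wp_on D A ++ nseq k1 (DL true)) ++
    Pass c o1' (if 0 <= i then b1 else ~~ b1) ::
    (nseq k1 (DL false) ++ pr_wp_on D B ++ nseq k2 (DL true)) ++
    Pass c o2' (if 0 <= i then b2 else ~~ b2) :: nseq k2 (DL false) ++ pr_wp_on D C.
  rewrite -[pr_wp D]/(pr_wp_on D D) {2}defD.
  rewrite pr_wp_on_cat pr_wp_on_cons pr_wp_on_cat pr_wp_on_cons.
  by rewrite !pr_wp_event_Pass -!catA.
have free' : all (crossing_in (predC1 c)) ((pr_wp_on D A ++ nseq k1 (DL true)) ++
    (nseq k1 (DL false) ++ pr_wp_on D B ++ nseq k2 (DL true)) ++
    nseq k2 (DL false) ++ pr_wp_on D C).
  move: (all_crossing_in_pr_wp_on D free).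
  by rewrite !pr_wp_on_cat !all_cat !all_nseq /= !orbT !andbT => /and3P[-> -> ->].
have o12' : o1' != o2' by rewrite /o1' /o2'; case: (0 <= i); rewrite // eqb_negLR negbK.
rewrite (winding_parity_split free' shape o12') degree_pr_wp degD.
rewrite !sum_dl_cat sum_dl_nseq_pos sum_dl_nseq_neg sum_dl_pr_wp_on /k1 /k2 /o1' /o2'.
clear -o12 wpD; case: (boolP (0 <= i)) => [i_ge0|i_lt0];
  by case: o1 o2 o12 wpD => [] [] //= _ wpD; lia.
Qed.

Lemma all_crossing_in_occurring D :
  all (crossing_in (fun c => ~~ all (crossing_in (predC1 c)) D)) D.
Proof.
apply/(all_nthP (DL true)) => n n_lt; case def_e: (nth _ D n) => [c o b|//] /=.
by apply/negP => /(all_nthP (DL true))/(_ n n_lt); rewrite def_e /= eqxx.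
Qed.

Theorem mainTheorem3 (D : diagram) :
  wf_diagram D -> degree D = 0 -> pr_wp (pr_wp D) = pr_wp D.
Proof.
move=> wfD degD; apply: pr_wp_on_id; apply: all_crossing_in_pr_wp_on.
apply: sub_all (all_crossing_in_occurring D) => -[c o b occ|//].
by rewrite /= (winding_parity_pr_wp wfD degD occ).
Qed.
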